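(* Let $N>0$, $m>0$, $F>0$, $\alpha>0$, $w>0$ be fixed with $Nm>\alpha$, and for $g\geq 0$, $\tau\in(0,1)$, $L_g\geq 0$ define \[ L=\frac{N\left[(1-\tau)(mL_g+\alpha F)+(mg+F)mN\right]}{\alpha+(Nm-\alpha)\tau},\qquad q=\frac{(1-\tau)(L+L_g-\alpha g)}{\left(Nm+\alpha(1-\tau)\right)(L+L_g)}, \] \[ p=\frac{L+L_g}{L+L_g-\alpha g}\left(mw+\frac{\alpha(1-\tau)w}{N}\right),\qquad \Pi=\left((L+L_g)q+g\right)(p-mw)-Fw, \] regarded as functions of $(g,\tau,L_g)$. Then \[ \frac{\partial \Pi}{\partial g}>0,\qquad \frac{\partial \Pi}{\partial \tau}<0 . \]
   Context: These are the symmetric-equilibrium private employment $L$, per-capita consumption $q$ of each variety, price $p$, and profit $\Pi$ of each firm in a monopolistic-competition general equilibrium model with a measure $N$ of firms, marginal and fixed labor inputs $m$ and $F$, CARA utility parameter $\alpha$, nominal wage $w$, income tax rate $\tau$, government purchase $g$ of each variety, and government employment $L_g$. Partial derivatives are taken in $(g,\tau,L_g)$ with other parameters fixed. *)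

From Stdlib Require Import Reals.
From Coquelicot Require Import Coquelicot.
Open Scope R_scope.

Definition Lpriv (N m F alpha : R) (g tau Lg : R) : R :=
  N * ((1 - tau) * (m * Lg + alpha * F) + (m * g + F) * m * N)
  / (alpha + (N * m - alpha) * tau).

Definition qcons (N m F alpha : R) (g tau Lg : R) : R :=
  let L := Lpriv N m F alpha g tau Lg in
  (1 - tau) * (L + Lg - alpha * g)
  / ((N * m + alpha * (1 - tau)) * (L + Lg)).

Definition price (N m F alpha w : R) (g tau Lg : R) : R :=
  let L := Lpriv N m F alpha g tau Lg in
  (L + Lg) / (L + Lg - alpha * g) * (m * w + alpha * (1 - tau) * w / N).

Definition profit (N m F alpha w : R) (g tau Lg : R) : R :=
  let L := Lpriv N m F alpha g tau Lg in
  ((L + Lg) * qcons N m F alpha g tau Lg + g)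
    * (price N m F alpha w g tau Lg - m * w) - F * w.

From Stdlib Require Import Reals Lra Psatz.
From Coquelicot Require Import Coquelicot.
Open Scope R_scope.

(* Write A := Lg + N F, B := A + (N m - alpha) g, C := (1 - tau) A + N m g,
   E := alpha + (N m - alpha) tau, K := N m + alpha (1 - tau) and S := K A + N^2 m^2 g.
   Then L + Lg = S / E and L + Lg - alpha g = K B / E, so the output of a firm is
   (L + Lg) q + g = C / E and its markup is p - m w = w alpha C / (N B), whence
   Pi = w alpha C^2 / (N B E) - F w wherever N, B, E, K, S are nonzero, in particular
   near any admissible point. Differentiating this closed form, the sign of dPi/dg is
   that of 2 N m B - (N m - alpha) C = A (2 N m - (N m - alpha)(1 - tau)) + N m (N m - alpha) g > 0,
   and dPi/dtau has the sign of -(2 A E + (N m - alpha) C) < 0. *)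

Section ClosedForm.

Variables N m F alpha w : R.

Definition profit_reduced (g tau Lg : R) : R :=
  w * alpha * ((1 - tau) * (Lg + N * F) + N * m * g) ^ 2
  / (N * ((Lg + N * F) + (N * m - alpha) * g) * (alpha + (N * m - alpha) * tau))
  - F * w.

Variables g tau Lg : R.

Hypothesis N_neq0 : N <> 0.
Hypothesis E_neq0 : alpha + (N * m - alpha) * tau <> 0.
Hypothesis K_neq0 : N * m + alpha * (1 - tau) <> 0.
Hypothesis B_neq0 : (Lg + N * F) + (N * m - alpha) * g <> 0.

Lemma Lpriv_add_Lg :
  Lpriv N m F alpha g tau Lg + Lg
  = ((N * m + alpha * (1 - tau)) * (Lg + N * F) + N * N * m * m * g)
    / (alpha + (N * m - alpha) * tau).
Proof. unfold Lpriv. field. exact E_neq0. Qed.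

Lemma Lpriv_add_Lg_sub_alpha_g :
  Lpriv N m F alpha g tau Lg + Lg - alpha * g
  = (N * m + alpha * (1 - tau)) * ((Lg + N * F) + (N * m - alpha) * g)
    / (alpha + (N * m - alpha) * tau).
Proof. unfold Lpriv. field. exact E_neq0. Qed.

Lemma firm_output_eq :
  (N * m + alpha * (1 - tau)) * (Lg + N * F) + N * N * m * m * g <> 0 ->
  (Lpriv N m F alpha g tau Lg + Lg) * qcons N m F alpha g tau Lg + g
  = ((1 - tau) * (Lg + N * F) + N * m * g) / (alpha + (N * m - alpha) * tau).
Proof.
  intros S_neq0. unfold qcons. cbv zeta.
  rewrite Lpriv_add_Lg_sub_alpha_g, Lpriv_add_Lg.
  field. auto.
Qed.

Lemma markup_eq :
  price N m F alpha w g tau Lg - m * w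
  = w * alpha * ((1 - tau) * (Lg + N * F) + N * m * g)
    / (N * ((Lg + N * F) + (N * m - alpha) * g)).
Proof.
  unfold price. cbv zeta.
  rewrite Lpriv_add_Lg_sub_alpha_g, Lpriv_add_Lg.
  field. auto.
Qed.

Lemma profit_eq_reduced :
  (N * m + alpha * (1 - tau)) * (Lg + N * F) + N * N * m * m * g <> 0 ->
  profit N m F alpha w g tau Lg = profit_reduced g tau Lg.
Proof.
  intros S_neq0. unfold profit, profit_reduced. cbv zeta.
  rewrite firm_output_eq, markup_eq by exact S_neq0.
  field. auto.
Qed.

End ClosedForm.

Lemma locally_pos_of_ex_derive (f : R -> R) (x : R) :
  ex_derive f x -> 0 < f x -> locally x (fun y => 0 < f y).
Proof.
  intros f_der fx_pos. apply (ex_derive_continuous f x f_der). now apply open_gt.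
Qed.

Lemma is_derive_profit_reduced_g N m F alpha w g tau Lg :
  N <> 0 -> alpha + (N * m - alpha) * tau <> 0 ->
  (Lg + N * F) + (N * m - alpha) * g <> 0 ->
  is_derive (fun x => profit_reduced N m F alpha w x tau Lg) g
    (w * alpha * ((1 - tau) * (Lg + N * F) + N * m * g)
     * (2 * N * m * ((Lg + N * F) + (N * m - alpha) * g)
        - (N * m - alpha) * ((1 - tau) * (Lg + N * F) + N * m * g))
     / (N * (alpha + (N * m - alpha) * tau) * ((Lg + N * F) + (N * m - alpha) * g) ^ 2)).
Proof.
  intros N_neq0 E_neq0 B_neq0. unfold profit_reduced.
  auto_derive.
  - repeat apply Rmult_integral_contrapositive_currified; assumption.
  - field. auto.
Qed.

Lemma is_derive_profit_reduced_tau N m F alpha w g tau Lg :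
  N <> 0 -> alpha + (N * m - alpha) * tau <> 0 ->
  (Lg + N * F) + (N * m - alpha) * g <> 0 ->
  is_derive (fun t => profit_reduced N m F alpha w g t Lg) tau
    (- (w * alpha * ((1 - tau) * (Lg + N * F) + N * m * g)
        * (2 * (Lg + N * F) * (alpha + (N * m - alpha) * tau)
           + (N * m - alpha) * ((1 - tau) * (Lg + N * F) + N * m * g)))
     / (N * ((Lg + N * F) + (N * m - alpha) * g) * (alpha + (N * m - alpha) * tau) ^ 2)).
Proof.
  intros N_neq0 E_neq0 B_neq0. unfold profit_reduced.
  auto_derive.
  - repeat apply Rmult_integral_contrapositive_currified; assumption.
  - field. auto.
Qed.

Section Equilibrium.

Variables N m F alpha w : R.
Hypothesis N_pos : 0 < N.
Hypothesis F_pos : 0 < F.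
Hypothesis alpha_pos : 0 < alpha.
Hypothesis w_pos : 0 < w.
Hypothesis alpha_lt_Nm : alpha < N * m.

Variables g tau Lg : R.
Hypothesis g_ge0 : 0 <= g.
Hypothesis tau_pos : 0 < tau.
Hypothesis tau_lt1 : tau < 1.
Hypothesis Lg_ge0 : 0 <= Lg.

Let A_pos : 0 < Lg + N * F. Proof. nra. Qed.
Let B_pos : 0 < (Lg + N * F) + (N * m - alpha) * g. Proof. nra. Qed.
Let C_pos : 0 < (1 - tau) * (Lg + N * F) + N * m * g. Proof. nra. Qed.
Let E_pos : 0 < alpha + (N * m - alpha) * tau. Proof. nra. Qed.
Let K_pos : 0 < N * m + alpha * (1 - tau). Proof. nra. Qed.

Lemma profit_locally_reduced_g :
  locally g (fun x => profit_reduced N m F alpha w x tau Lg = profit N m F alpha w x tau Lg).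
Proof.
  assert (S_pos : locally g (fun x =>
    0 < (N * m + alpha * (1 - tau)) * (Lg + N * F) + N * N * m * m * x)).
  { apply (locally_pos_of_ex_derive (fun x => _)); [auto_derive; auto | nra]. }
  assert (B_pos_near : locally g (fun x => 0 < (Lg + N * F) + (N * m - alpha) * x)).
  { apply (locally_pos_of_ex_derive (fun x => _)); [auto_derive; auto | exact B_pos]. }
  generalize (filter_and _ _ S_pos B_pos_near). apply filter_imp.
  intros x [S_x B_x]. symmetry. apply profit_eq_reduced; lra.
Qed.

Lemma profit_locally_reduced_tau :
  locally tau (fun t => profit_reduced N m F alpha w g t Lg = profit N m F alpha w g t Lg).
Proof.
  assert (S_pos : locally tau (fun t =>
    0 < (N * m + alpha * (1 - t)) * (Lg + N * F) + N * N * m * m * g)).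
  { apply (locally_pos_of_ex_derive (fun x => _)); [auto_derive; auto | nra]. }
  assert (E_pos_near : locally tau (fun t => 0 < alpha + (N * m - alpha) * t)).
  { apply (locally_pos_of_ex_derive (fun x => _)); [auto_derive; auto | exact E_pos]. }
  assert (K_pos_near : locally tau (fun t => 0 < N * m + alpha * (1 - t))).
  { apply (locally_pos_of_ex_derive (fun x => _)); [auto_derive; auto | exact K_pos]. }
  generalize (filter_and _ _ S_pos (filter_and _ _ E_pos_near K_pos_near)).
  apply filter_imp.
  intros t [S_t [E_t K_t]]. symmetry. apply profit_eq_reduced; lra.
Qed.

Lemma profit_increasing_in_g :
  exists l, is_derive (fun x => profit N m F alpha w x tau Lg) g l /\ 0 < l.
Proof.
  eexists. split.
  - apply (is_derive_ext_loc _ _ _ _ profit_locally_reduced_g).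
    apply is_derive_profit_reduced_g; lra.
  - assert (sign_factor_pos :
      0 < 2 * N * m * ((Lg + N * F) + (N * m - alpha) * g)
          - (N * m - alpha) * ((1 - tau) * (Lg + N * F) + N * m * g)) by nra.
    apply Rdiv_lt_0_compat; repeat apply Rmult_lt_0_compat; lra.
Qed.

Lemma profit_decreasing_in_tau :
  exists l, is_derive (fun t => profit N m F alpha w g t Lg) tau l /\ l < 0.
Proof.
  eexists. split.
  - apply (is_derive_ext_loc _ _ _ _ profit_locally_reduced_tau).
    apply is_derive_profit_reduced_tau; lra.
  - assert (sign_factor_pos :
      0 < 2 * (Lg + N * F) * (alpha + (N * m - alpha) * tau)
          + (N * m - alpha) * ((1 - tau) * (Lg + N * F) + N * m * g)) by nra.
    unfold Rdiv. rewrite Ropp_mult_distr_l_reverse.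
    apply Ropp_lt_gt_0_contravar.
    repeat (apply Rmult_lt_0_compat || apply Rinv_0_lt_compat); lra.
Qed.

End Equilibrium.

Theorem theorem4 (N m F alpha w : R) :
  0 < N -> 0 < m -> 0 < F -> 0 < alpha -> 0 < w -> alpha < N * m ->
  forall g tau Lg : R, 0 <= g -> 0 < tau < 1 -> 0 <= Lg ->
    (ex_derive (fun g' => profit N m F alpha w g' tau Lg) g /\
     Derive (fun g' => profit N m F alpha w g' tau Lg) g > 0) /\
    (ex_derive (fun t => profit N m F alpha w g t Lg) tau /\
     Derive (fun t => profit N m F alpha w g t Lg) tau < 0).
Proof.
  (* [0 < m] already follows from [0 < alpha < N * m]. *)
  intros N_pos _ F_pos alpha_pos w_pos alpha_lt_Nm g tau Lg g_ge0 [tau_pos tau_lt1] Lg_ge0.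
  destruct (profit_increasing_in_g N m F alpha w N_pos F_pos alpha_pos w_pos
              alpha_lt_Nm g tau Lg g_ge0 tau_pos tau_lt1 Lg_ge0) as [dg [Hdg dg_pos]].
  destruct (profit_decreasing_in_tau N m F alpha w N_pos F_pos alpha_pos w_pos
              alpha_lt_Nm g tau Lg g_ge0 tau_pos tau_lt1 Lg_ge0) as [dt [Hdt dt_neg]].
  split; split.
  - exists dg. exact Hdg.
  - erewrite is_derive_unique by exact Hdg. exact dg_pos.
  - exists dt. exact Hdt.
  - erewrite is_derive_unique by exact Hdt. exact dt_neg.
Qed.
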